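(* Let $X$ be a set and $B$ a ternary relation on $X$. Then $(X,B)$ is $\mathbf{S}_0$-separated if and only if $B$ satisfies: (1) $B(x,x,y)$ and $B(x,y,y)$ for all $x,y\in X$; (2) $B(u,x,v)\wedge B(u,y,v)\wedge B(x,z,y)\implies B(u,z,v)$ for all $u,v,x,y,z\in X$; (3) $B(x,y,x)\wedge B(y,x,y)\implies x=y$ for all $x,y\in X$. Moreover, if $(X,B)$ is a betweenness structure then for every $a,b\in X$ the set $[a,b]=\{x\in X:B(a,x,b)\}$ is convex.
   Context: $\mathbf{S}_0=(\{0,1\},\beta)$ where $\beta(x,y,z)$ holds iff ($x=z=1\implies y=1$). A structure $(X,B)$ is $\mathbf{S}_0$-separated if it embeds (injective map preserving and reflecting the relation) into some power of $\mathbf{S}_0$; an $\mathbf{S}_0$-separated structure is called a betweenness structure. A subset $G$ of $(X,B)$ is convex if for all $a,b\in G$ and $x\in X$, $B(a,x,b)$ implies $x\in G$. *)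

Definition beta (x y z : bool) : Prop := (x = true /\ z = true) -> y = true.

Definition beta_pow (I : Type) (x y z : I -> bool) : Prop :=
  forall i : I, beta (x i) (y i) (z i).

Definition S0_separated (X : Type) (B : X -> X -> X -> Prop) : Prop :=
  exists (I : Type) (f : X -> I -> bool),
    (forall x y : X, f x = f y -> x = y) /\
    (forall x y z : X, B x y z <-> beta_pow I (f x) (f y) (f z)).

Definition betweenness_structure (X : Type) (B : X -> X -> X -> Prop) : Prop :=
  S0_separated X B.

Definition convex (X : Type) (B : X -> X -> X -> Prop) (G : X -> Prop) : Prop :=
  forall a b x : X, G a -> G b -> B a x b -> G x.

Definition interval (X : Type) (B : X -> X -> X -> Prop) (a b : X) : X -> Prop :=
  fun x => B a x b.

(* The axioms hold in S0, hence coordinatewise in every power of S0, and they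
   transfer along embeddings.  Conversely, axiom (2) says exactly that every
   interval [a,b] is convex, and by (1) it contains a and b.  So the
   indicator functions of all convex sets, taken as coordinates, reflect B:
   if y lies in every convex set containing x and z, it lies in [x,z].  They
   also preserve B by convexity, and by (3) they separate points, since points
   lying in the same convex sets satisfy B(x,y,x) and B(y,x,y). *)

From Stdlib Require Import ClassicalEpsilon FunctionalExtensionality.

Section PowerOfS0.

Variable I : Type.

Lemma beta_pow_ends (x y : I -> bool) : beta_pow I x x y /\ beta_pow I x y y.
Proof. split; intros i [Hx Hy]; assumption. Qed.

Lemma beta_pow_interval_closed (u v x y z : I -> bool) :
  beta_pow I u x v -> beta_pow I u y v -> beta_pow I x z y -> beta_pow I u z v.
Proof. intros Hx Hy Hz i Huv. apply Hz. split; [apply Hx | apply Hy]; exact Huv. Qed.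

Lemma beta_pow_antisym (x y : I -> bool) :
  beta_pow I x y x -> beta_pow I y x y -> x = y.
Proof.
  intros Hxy Hyx. apply functional_extensionality. intros i.
  specialize (Hxy i); specialize (Hyx i); unfold beta in *.
  destruct (x i), (y i); auto; symmetry; apply Hxy; auto.
Qed.

End PowerOfS0.

Section Betweenness.

Variables (X : Type) (B : X -> X -> X -> Prop).

Definition betweenness_axioms : Prop :=
  (forall x y : X, B x x y /\ B x y y) /\
  (forall u v x y z : X, B u x v -> B u y v -> B x z y -> B u z v) /\
  (forall x y : X, B x y x -> B y x y -> x = y).

Lemma S0_separated_axioms : S0_separated X B -> betweenness_axioms.
Proof.
  intros [I [f [f_inj f_B]]]. split; [|split].
  - intros x y; split; apply f_B; apply beta_pow_ends.
  - intros u v x y z Hx Hy Hz. apply f_B.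
    apply (beta_pow_interval_closed I _ _ (f x) (f y)); apply f_B; assumption.
  - intros x y Hxy Hyx. apply f_inj, beta_pow_antisym; apply f_B; assumption.
Qed.

Lemma interval_convex :
  (forall u v x y z : X, B u x v -> B u y v -> B x z y -> B u z v) ->
  forall a b : X, convex X B (interval X B a b).
Proof. intros Hcl a b x y z; apply Hcl. Qed.

Definition convex_set : Type := { G : X -> Prop | convex X B G }.

Definition convex_indicator (x : X) (G : convex_set) : bool :=
  if excluded_middle_informative (proj1_sig G x) then true else false.

Lemma convex_indicator_true (x : X) (G : convex_set) :
  convex_indicator x G = true <-> proj1_sig G x.
Proof.
  unfold convex_indicator.
  destruct (excluded_middle_informative (proj1_sig G x)); split; easy.
Qed.

Lemma beta_pow_convex_indicator (x y z : X) :
  beta_pow convex_set (convex_indicator x) (convex_indicator y) (convex_indicator z)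
  <-> forall G : convex_set, proj1_sig G x -> proj1_sig G z -> proj1_sig G y.
Proof.
  split.
  - intros H G Gx Gz. apply convex_indicator_true, H.
    split; apply convex_indicator_true; assumption.
  - intros H G [Gx Gz]. apply convex_indicator_true, H; apply convex_indicator_true;
      assumption.
Qed.

Lemma between_iff_convex_closed :
  (forall x y : X, B x x y /\ B x y y) ->
  (forall u v x y z : X, B u x v -> B u y v -> B x z y -> B u z v) ->
  forall x y z : X,
    B x y z <-> forall G : convex_set, proj1_sig G x -> proj1_sig G z -> proj1_sig G y.
Proof.
  intros ends closed x y z. split.
  - intros Hy [G G_convex] Gx Gz. exact (G_convex _ _ _ Gx Gz Hy).
  - intros H. apply (H (exist _ (interval X B x z) (interval_convex closed x z)));
      apply ends.
Qed.

Lemma axioms_S0_separated : betweenness_axioms -> S0_separated X B.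
Proof.
  intros [ends [closed antisym]].
  pose proof (between_iff_convex_closed ends closed) as B_iff.
  exists convex_set, convex_indicator. split.
  - intros x y Hxy.
    assert (same_sets : forall G : convex_set, proj1_sig G x <-> proj1_sig G y).
    { intros G. rewrite <- !convex_indicator_true, Hxy. reflexivity. }
    apply antisym; apply B_iff; intros G G1 _; apply same_sets; assumption.
  - intros x y z. rewrite beta_pow_convex_indicator. apply B_iff.
Qed.

End Betweenness.

Theorem mainTheorem16 (X : Type) (B : X -> X -> X -> Prop) :
  (S0_separated X B <->
    ((forall x y : X, B x x y /\ B x y y) /\
     (forall u v x y z : X, B u x v -> B u y v -> B x z y -> B u z v) /\
     (forall x y : X, B x y x -> B y x y -> x = y))) /\
  (betweenness_structure X B ->
     forall a b : X, convex X B (interval X B a b)).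
Proof.
  split.
  - split; [apply S0_separated_axioms | apply axioms_S0_separated].
  - intros separated. apply interval_convex.
    apply (S0_separated_axioms X B separated).
Qed.
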